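(* Let $V$ be a finite set, let $t,q$ be positive integers, and let $N=(t!)^2\cdot q^{t+1}$. Let $\mathbf{x}_1,\dots,\mathbf{x}_N\in V^t$ be vectors each of which has pairwise distinct entries. Then there exist indices $i_1<\dots<i_q$ such that, writing $\mathbf{y}_k=\mathbf{x}_{i_k}$ for $k=1,\dots,q$: (1) for each $j=1,\dots,t$, the entries $(\mathbf{y}_1)_j,\dots,(\mathbf{y}_q)_j$ are either all equal or pairwise distinct; and (2) the sets $Y_1,\dots,Y_t$ are pairwise disjoint, where $Y_j=\{(\mathbf{y}_1)_j,\dots,(\mathbf{y}_q)_j\}$.
   Context: For a vector $\mathbf{x}\in V^t$, $(\mathbf{x})_j$ denotes its $j$-th entry. *)

From mathcomp Require Import all_boot.
Set Implicit Arguments.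
Unset Strict Implicit.
Unset Printing Implicit Defensive.

From mathcomp Require Import all_boot.

Set Implicit Arguments.
Unset Strict Implicit.

(* Induction on the number s of free coordinates, keeping a set F of vectors
   that agree on the frozen coordinates J.  Take a maximal C in F whose
   members have pairwise disjoint sets of free entries.  If #|C| >= q, any q
   members of C do.  Otherwise, by maximality, every vector of F has a free
   entry equal to some free entry of a member of C: at most (q - 1) s^2 choices
   of (member, position, position), so one choice is shared by at least a
   1/((q - 1) s^2) fraction of F.  Those vectors agree on one more coordinate,
   and the bound (s!)^2 q^(s+1) is the one that survives this division. *)

Lemma leq_card_bigcup (I T : finType) (P : {pred I}) (A : I -> {set T}) :
  #|\bigcup_(i in P) A i| <= \sum_(i in P) #|A i|.
Proof.
elim/big_rec2: _ => [|i n B _ leBn]; first by rewrite cards0.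
by apply: leq_trans (leq_card_setU _ _) _; rewrite leq_add2l.
Qed.

Lemma pigeonhole_bigcup (I T : finType) (P : {set I}) (A : I -> {set T})
    (F : {set T}) m :
  F \subset \bigcup_(i in P) A i -> #|P| * m < #|F| ->
  exists2 i, i \in P & m < #|A i|.
Proof.
move=> sFA ltF; apply/exists_inP; apply: contraLR ltF => /exists_inPn small.
rewrite -leqNgt -sum_nat_const.
apply: leq_trans (subset_leq_card sFA) _.
apply: leq_trans (leq_card_bigcup P A) _.
by apply: leq_sum => i /small; rewrite -ltnNge ltnS.
Qed.

Lemma exists_subset_card (T : finType) (A : {set T}) n :
  n <= #|A| -> exists2 B : {set T}, B \subset A & #|B| = n.
Proof.
case/card_geqP=> s [uniq_s size_s sA]; exists [set a in s].
  by apply/subsetP => a; rewrite inE => /sA.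
by rewrite cardsE (card_uniqP uniq_s).
Qed.

Lemma ltn_enum_val_ord n (A : {set 'I_n}) (i j : 'I_#|A|) :
  i < j -> enum_val i < enum_val j.
Proof.
have sorted_A : sorted ltn (map val (enum A)).
  rewrite -[enum _](eq_filter (mem_enum _)) -(eq_filter (mem_map val_inj _)).
  by rewrite -filter_map (sorted_filter ltn_trans) // unlock val_ord_enum iota_ltn_sorted.
move=> lt_ij; have i0 := enum_val i.
rewrite !(enum_val_nth i0) -!(nth_map i0 0) -?cardE //.
by apply: (sorted_ltn_nth ltn_trans) => //; rewrite inE size_map -cardE.
Qed.

Lemma fact_bound_step s q c :
  c < q -> c * s.+1 ^ 2 * (s`! ^ 2 * q ^ s.+1).-1 < s.+1`! ^ 2 * q ^ s.+2.
Proof.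
move=> lt_cq; have f_gt0 : 0 < s`! ^ 2 * q ^ s.+1.
  by rewrite muln_gt0 !expn_gt0 fact_gt0 (leq_ltn_trans (leq0n c) lt_cq).
have w_gt0 : 0 < s.+1 ^ 2 by rewrite expn_gt0.
have -> : s.+1`! ^ 2 * q ^ s.+2 = s.+1 ^ 2 * (q * (s`! ^ 2 * q ^ s.+1)).
  by rewrite factS expnMn [q ^ s.+2]expnS -mulnA [s`! ^ 2 * _]mulnCA.
rewrite mulnAC mulnC ltn_pmul2l //.
by apply: leq_ltn_trans (leq_mul (leqnn c) (leq_pred _)) _; rewrite ltn_pmul2r.
Qed.

Section Regular.

Variables (I T V : finType) (x : I -> T -> V).
Implicit Types (J : {set T}) (F C K : {set I}).

Definition agree_on J F := {in J, forall j, {in F &, forall a b, x a j = x b j}}.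

Definition disjoint_off J C :=
  [forall a in C, forall b in C, forall j in ~: J, forall j' in ~: J,
     (a != b) ==> (x a j != x b j')].

Definition regular K :=
  (forall j, {in K &, forall a b, x a j = x b j} \/ {in K &, injective (x^~ j)}) /\
  (forall j j', j != j' -> {in K &, forall a b, x a j != x b j'}).

Definition coincidence F (p : I * T * T) :=
  let: (c, j, j') := p in [set n in F | x n j == x c j'].

Lemma disjoint_offP J C :
  reflect {in C &, forall a b, a != b -> forall j j', j \notin J -> j' \notin J ->
             x a j != x b j'}
          (disjoint_off J C).
Proof.
apply: (iffP forall_inP) => [dC a b aC bC ab j j' jJ j'J | dC a aC].
  move/forall_inP/(_ b bC)/forall_inP/(_ j): (dC a aC); rewrite inE jJ.
  by move=> /(_ isT)/forall_inP/(_ j'); rewrite inE j'J => /(_ isT)/implyP/(_ ab).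
apply/forall_inP => b bC; apply/forall_inP => j; rewrite inE => jJ.
by apply/forall_inP => j'; rewrite inE => j'J; apply/implyP => ab; apply: dC.
Qed.

Lemma disjoint_offS J C C' : C' \subset C -> disjoint_off J C -> disjoint_off J C'.
Proof.
move=> /subsetP sC' /disjoint_offP dC; apply/disjoint_offP => a b aC' bC'.
exact: dC (sC' a aC') (sC' b bC').
Qed.

Lemma disjoint_off_full J C : #|~: J| = 0 -> disjoint_off J C.
Proof.
move=> /cards0_eq freeJ; apply/disjoint_offP => a b _ _ _ j.
by rewrite -in_setC freeJ inE.
Qed.

Lemma agree_onS J F F' : F' \subset F -> agree_on J F -> agree_on J F'.
Proof. by move=> /subsetP sF' aF j jJ a b aF' bF'; apply: aF; rewrite ?sF'. Qed.

Lemma agree_on_coincidence J F c j j' :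
  agree_on J F -> agree_on (j |: J) (coincidence F (c, j, j')).
Proof.
move=> aF j0; rewrite in_setU1 => /orP[/eqP-> | j0J] a b; rewrite !inE /=.
  by move=> /andP[_ /eqP->] /andP[_ /eqP->].
by move=> /andP[aF' _] /andP[bF' _]; apply: aF.
Qed.

Lemma card_free_setU1 J j s : j \notin J -> #|~: J| = s.+1 -> #|~: (j |: J)| = s.
Proof.
rewrite setCU setIC -setDE => jJ; rewrite (cardsD1 j) inE jJ.
by move=> [<-].
Qed.

Lemma maxset_disjoint_off_cover J F C j0 : j0 \notin J ->
    maxset (fun C => (C \subset F) && disjoint_off J C) C ->
  F \subset \bigcup_(p in setX (setX C (~: J)) (~: J)) coincidence F p.
Proof.
move=> j0J /maxsetP[/andP[sCF dC] maxC]; apply/subsetP => n nF.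
apply/negPn/negP => /bigcupP n_free.
have nC : n \notin C.
  apply: contra_notN n_free => nC; exists (n, j0, j0); first by rewrite !inE nC j0J.
  by rewrite inE nF eqxx.
have dnC : disjoint_off J (n |: C).
  apply/disjoint_offP => a b; move/disjoint_offP: dC => dC.
  rewrite !in_setU1 => /predU1P[-> | aC] /predU1P[-> | bC] //; first by rewrite eqxx.
  - move=> _ j j' jJ j'J; apply/eqP => e; apply: n_free; exists (b, j, j').
      by rewrite !inE bC jJ j'J.
    by rewrite inE nF e eqxx.
  - move=> _ j j' jJ j'J; apply/eqP => e; apply: n_free; exists (a, j', j).
      by rewrite !inE aC jJ j'J.
    by rewrite inE nF -e eqxx.
  - exact: dC.
have := maxC (n |: C); rewrite subUset sub1set nF sCF dnC subsetUr => /(_ isT isT).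
by move=> /setP/(_ n); rewrite setU11 (negbTE nC).
Qed.

Hypothesis x_inj : forall a, injective (x a).

Lemma regular_agree_disjoint J K : agree_on J K -> disjoint_off J K -> regular K.
Proof.
move=> aK /disjoint_offP dK; split=> [j | j j' jj' a b aK' bK'].
  have [jJ | jJ] := boolP (j \in J); [left; exact: aK | right => a b aK' bK' e].
  have [// | ab] := eqVneq a b.
  by move: (dK a b aK' bK' ab j j jJ jJ); rewrite e eqxx.
have x_neq c : x c j != x c j' by apply: contra jj' => /eqP/x_inj->.
have [-> | ab] := eqVneq a b; first exact: x_neq.
have [jJ | jJ] := boolP (j \in J); first by rewrite (aK j jJ a b).
have [j'J | j'J] := boolP (j' \in J); first by rewrite -(aK j' j'J a b).
exact: dK.
Qed.

Lemma exists_regular_subset J F C q : agree_on J F -> C \subset F ->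
  disjoint_off J C -> q <= #|C| -> exists K, #|K| = q /\ regular K.
Proof.
move=> aF sCF dC /exists_subset_card[K sKC cK]; exists K; split=> //.
apply: regular_agree_disjoint (disjoint_offS sKC dC).
exact: agree_onS (subset_trans sKC sCF) aF.
Qed.

Lemma exists_regular q s J F : 0 < q -> #|~: J| = s -> agree_on J F ->
  s`! ^ 2 * q ^ s.+1 <= #|F| -> exists K, #|K| = q /\ regular K.
Proof.
elim: s J F => [|s IHs] J F q_gt0 freeJ aF.
  rewrite fact0 mul1n expn1; apply: exists_regular_subset aF (subxx F) _.
  exact: disjoint_off_full.
move=> bigF; pose admissible C := (C \subset F) && disjoint_off J C.
have [C maxC] : {C | maxset admissible C}.
  apply: ex_maxset; exists set0; rewrite /admissible sub0set.
  by apply/disjoint_offP => a; rewrite inE.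
have /andP[sCF dC] := maxsetp maxC.
have [le_qC | lt_Cq] := leqP q #|C|; first exact: exists_regular_subset aF sCF dC le_qC.
have [j0 j0J] : exists j0, j0 \in ~: J by apply/set0Pn; rewrite -card_gt0 freeJ.
rewrite inE in j0J.
have := pigeonhole_bigcup (maxset_disjoint_off_cover j0J maxC) _.
rewrite !cardsX freeJ -mulnA mulnn => /(_ _ (leq_trans (fact_bound_step _ lt_Cq) bigF)).
case=> [[[c j] j']]; rewrite !inE /= => /andP[/andP[_ jJ] _].
rewrite prednK ?muln_gt0 ?expn_gt0 ?fact_gt0 ?q_gt0 // => bigA.
exact: IHs q_gt0 (card_free_setU1 jJ freeJ) (agree_on_coincidence aF) bigA.
Qed.

Lemma regular_indexed (J : finType) (i : J -> I) K : injective i ->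
    (forall k, i k \in K) -> regular K ->
  (forall j, (forall k k', x (i k) j = x (i k') j) \/ injective (fun k => x (i k) j)) /\
  (forall j j', j != j' ->
     [disjoint [set x (i k) j | k : J] & [set x (i k) j' | k : J]]).
Proof.
move=> i_inj iK [const_or_inj disj]; split=> [j | j j' jj'].
  case: (const_or_inj j) => [const | inj]; [left | right] => k k'.
    exact: const.
  by move=> /inj e; apply: i_inj; apply: e.
rewrite -setI_eq0; apply/eqP/setP => v; rewrite !inE.
apply/negP => /andP[/imsetP[k _ ->] /imsetP[k' _ /eqP]].
by apply/negP; apply: disj.
Qed.

End Regular.

Theorem lemma3p3 (V : finType) (t q : nat) (ht : 0 < t) (hq : 0 < q)
  (x : 'I_((t`!) ^ 2 * q ^ t.+1) -> 'I_t -> V)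
  (hx : forall n, injective (x n)) :
  exists i : 'I_q -> 'I_((t`!) ^ 2 * q ^ t.+1),
    (forall k k' : 'I_q, k < k' -> i k < i k') /\
    (forall j : 'I_t,
       (forall k k' : 'I_q, x (i k) j = x (i k') j) \/
       injective (fun k : 'I_q => x (i k) j)) /\
    (forall j j' : 'I_t, j != j' ->
       [disjoint [set x (i k) j | k : 'I_q] & [set x (i k) j' | k : 'I_q]]).
Proof.
have free0 : #|~: (set0 : {set 'I_t})| = t by rewrite setC0 cardsT card_ord.
have agree0 : agree_on x set0 setT by move=> j; rewrite inE.
have bigT : t`! ^ 2 * q ^ t.+1 <= #|[set: 'I_(t`! ^ 2 * q ^ t.+1)]|.
  by rewrite cardsT card_ord.
have [K [cK regK]] := exists_regular hx hq free0 agree0 bigT.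
pose i k := enum_val (cast_ord (esym cK) k).
exists i; split=> [k k' | ].
  exact: (@ltn_enum_val_ord _ K (cast_ord _ k) (cast_ord _ k')).
apply: regular_indexed regK => [k k' /enum_val_inj/cast_ord_inj // | k].
exact: enum_valP.
Qed.
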